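(* Let $K\subset\mathbb R^m$ be compact, let $B$ be a linear subspace of $C(K)$ such that $B=B_{\mathbb R}+iB_{\mathbb R}$ where $B_{\mathbb R}:=B\cap C_{\mathbb R}(K)$ (i.e., $B$ has a basis of real-valued functions). Let $L$ be a bounded linear operator on $B$ with $L:B\to C(K)$ and $L(B_{\mathbb R})\subseteq C_{\mathbb R}(K)$, and let $\|\cdot\|$ be a monotone norm on $B$ (i.e., $g,h\in B$ and $|g(x)|\le|h(x)|$ for all $x\in K$ imply $\|g\|\le\|h\|$). Then $$\sup_{h\in B\setminus\{0\}}\frac{\|L(h)\|_{C(K)}}{\|h\|}=\sup_{g\in B_{\mathbb R}\setminus\{0\}}\frac{\|L(g)\|_{C_{\mathbb R}(K)}}{\|g\|}.$$
   Context: $C(K)$ is the space of continuous complex-valued functions on $K$ with the maximum norm, $C_{\mathbb R}(K)$ its subspace of real-valued functions. *)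

From HB Require Import structures.
From mathcomp Require Import all_boot all_order all_algebra.
From mathcomp Require Import all_classical all_reals all_analysis.
From mathcomp Require Import complex.
Import Order.TTheory GRing.Theory Num.Theory.
Import numFieldNormedType.Exports.
Import ComplexField.Normc.
Local Open Scope classical_set_scope.
Local Open Scope ring_scope.

(* Continuity of a complex-valued function is expressed through its real and
   imaginary parts (the topology of C = R^2; R[i] carries no topology in the
   library).
   Elements of C(K), K a subset of R^m = 'rV[R]_m, are represented by
   functions 'rV[R]_m -> R[i] that are continuous on K (for the subspace
   topology) and vanish outside K: this is a canonical representative of
   each element of C(K), so that equality of such functions is equality
   in C(K). *)
Definition CK (R : realType) (m : nat) (K : set 'rV[R]_m) :
  set ('rV[R]_m -> R[i]) :=
  [set f : 'rV[R]_m -> R[i] | {within K, continuous (fun x => complex.Re (f x))} /\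
           {within K, continuous (fun x => complex.Im (f x))} /\
           (forall x, ~ K x -> f x = 0 :> R[i])].

Definition realvalued (R : realType) (m : nat) (f : 'rV[R]_m -> R[i]) : Prop :=
  forall x, complex.Im (f x) = 0.

Definition supnorm (R : realType) (m : nat) (K : set 'rV[R]_m)
  (f : 'rV[R]_m -> R[i]) : R :=
  sup [set normc (f x) | x in K].

Arguments CK {R m}.
Arguments realvalued {R m}.
Arguments supnorm {R m}.

From HB Require Import structures.
From mathcomp Require Import all_boot all_order all_algebra.
From mathcomp Require Import all_classical all_reals all_analysis.
From mathcomp Require Import complex.
From mathcomp Require Import lra ring.
Import Order.TTheory GRing.Theory Num.Theory.
Import numFieldNormedType.Exports.
Import ComplexField.Normc.
Local Open Scope classical_set_scope.
Local Open Scope ring_scope.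

(* The inequality >= is trivial, as B_R is a subset of B. Conversely, write
   h = g1 + i g2 with g1, g2 real-valued, fix x0 and let p + iq := L h(x0),
   so that p = L g1(x0) and q = L g2(x0). The real function g := p g1 + q g2
   satisfies L g(x0) = |L h(x0)|^2 and, by Cauchy-Schwarz in R^2,
   |g| <= |L h(x0)| |h| pointwise. With S the supremum over B_R,
   monotonicity of the norm gives
     |L h(x0)|^2 <= ||L g|| <= S ||g|| <= S |L h(x0)| ||h||,
   hence |L h(x0)| <= S ||h||. *)

Section ComplexFacts.
Context {R : realType}.
Implicit Types (p q : R) (z a b : R[i]).

Lemma complex_real z : complex.Im z = 0 -> z = (complex.Re z)%:C%C.
Proof. by case: z => a b /= ->. Qed.

Lemma normc_ge0 z : 0 <= normc z.
Proof. by case: z => a b; rewrite /normc sqrtr_ge0. Qed.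

Lemma normc_real p : 0 <= p -> normc (p%:C%C : R[i]) = p.
Proof. by move=> p0; rewrite /normc /= expr0n /= addr0 sqrtr_sqr ger0_norm. Qed.

Lemma normc_real_comb_le p q a b :
  complex.Im a = 0 -> complex.Im b = 0 ->
  normc (p%:C%C * a + q%:C%C * b) <= Num.sqrt (p ^+ 2 + q ^+ 2) * normc (a + 'i%C * b).
Proof.
move=> /complex_real -> /complex_real ->.
rewrite /normc /= -sqrtrM ?addr_ge0 ?sqr_ge0 //; apply: ler_wsqrtr.
rewrite !(mulr0, mul0r, subr0, addr0, add0r, expr0n) /=.
have := sqr_ge0 (p * complex.Re b - q * complex.Re a); nra.
Qed.

Lemma normc_real_add_i p q :
  normc (p%:C%C + 'i%C * q%:C%C : R[i]) = Num.sqrt (p ^+ 2 + q ^+ 2).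
Proof. by rewrite /normc /= !(mulr0, mul0r, subr0, addr0, add0r, mul1r). Qed.

End ComplexFacts.

Section SupFacts.
Context {R : realType}.
Implicit Types (E : set R) (s : R).

Lemma sup_ge0 E : (forall e, E e -> 0 <= e) -> 0 <= sup E.
Proof.
move=> E_ge0; have [[[e Ee] ubE]|/sup_out->//] := pselect (has_sup E).
exact: le_trans (E_ge0 e Ee) (ub_le_sup ubE Ee).
Qed.

(* Since [sup set0 = 0], a nonnegative bound needs no nonemptiness. *)
Lemma ge_sup_ge0 E s : 0 <= s -> ubound E s -> sup E <= s.
Proof.
move=> s_ge0 ubE; have [E0|/set0P E_neq0] := eqVneq E set0; first by rewrite E0 sup0.
exact: ge_sup.
Qed.

Variables (m : nat) (K : set 'rV[R]_m).

Lemma supnorm_ge0 f : 0 <= supnorm K f.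
Proof. by apply: sup_ge0 => _ [x _ <-]; exact: normc_ge0. Qed.

Lemma normc_le_supnorm f x :
  has_ubound [set normc (f x) | x in K] -> K x -> normc (f x) <= supnorm K f.
Proof. by move=> ubf Kx; apply: (ub_le_sup ubf); exists x. Qed.

End SupFacts.

Section RealReduction.
Context {R : realType} {m : nat} {K : set 'rV[R]_m} {B : set ('rV[R]_m -> R[i])}
  {L : ('rV[R]_m -> R[i]) -> ('rV[R]_m -> R[i])} {N : ('rV[R]_m -> R[i]) -> R} {C : R}.
Hypotheses
  (B0 : B (fun _ => 0))
  (Badd : forall g h, B g -> B h -> B (fun x => g x + h x))
  (Bscale : forall (a : R[i]) h, B h -> B (fun x => a * h x))
  (Bdecomp : forall h, B h -> exists g1 g2, [/\ B g1, realvalued g1, B g2, realvalued g2 &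
        h = (fun x => g1 x + 'i%C * g2 x)])
  (N_ge0 : forall h, B h -> 0 <= N h)
  (N_eq0 : forall h, B h -> N h = 0 -> h = (fun _ => 0))
  (Nscale : forall (a : R[i]) h, B h -> N (fun x => a * h x) = normc a * N h)
  (N_monotone : forall g h, B g -> B h -> (forall x, K x -> normc (g x) <= normc (h x)) ->
        N g <= N h)
  (Ladd : forall g h, B g -> B h -> L (fun x => g x + h x) = (fun x => L g x + L h x))
  (Lscale : forall (a : R[i]) h, B h -> L (fun x => a * h x) = (fun x => a * L h x))
  (L_bounded : forall h, B h -> supnorm K (L h) <= C * N h)
  (L_real : forall g, B g -> realvalued g -> realvalued (L g)).

Let real_ratios := [set supnorm K (L g) / N g |
  g in [set g | B g /\ realvalued g /\ g <> (fun _ => 0)]].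

Lemma L0 : L (fun _ => 0) = (fun _ => 0).
Proof.
have := Lscale 0 _ B0.
under eq_fun do rewrite mul0r.
by move->; apply: funext => x; rewrite mul0r.
Qed.

Lemma L_lincomb (a b : R[i]) g1 g2 : B g1 -> B g2 ->
  L (fun x => a * g1 x + b * g2 x) = (fun x => a * L g1 x + b * L g2 x).
Proof. by move=> Bg1 Bg2; rewrite (Ladd _ _ (Bscale _ _ Bg1) (Bscale _ _ Bg2)) !Lscale. Qed.

Lemma N_gt0 h : B h -> h <> (fun _ => 0) -> 0 < N h.
Proof. by move=> Bh h_neq0; rewrite lt0r N_ge0 // andbT; apply/eqP => /(N_eq0 _ Bh). Qed.

Lemma ratio_le_bound h : B h -> h <> (fun _ => 0) -> supnorm K (L h) / N h <= C.
Proof. by move=> Bh h_neq0; rewrite ler_pdivrMr ?N_gt0 ?L_bounded. Qed.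

Lemma sup_real_ratios_ge0 : 0 <= sup real_ratios.
Proof. by apply: sup_ge0 => _ [g [Bg _] <-]; rewrite divr_ge0 ?supnorm_ge0 ?N_ge0. Qed.

Lemma supnorm_L_real_le g : B g -> realvalued g -> g <> (fun _ => 0) ->
  supnorm K (L g) <= sup real_ratios * N g.
Proof.
move=> Bg g_real g_neq0; rewrite -ler_pdivrMr ?N_gt0 //.
have ub_ratios : has_ubound real_ratios.
  by exists C => _ [f [Bf [_ f_neq0]] <-]; exact: ratio_le_bound.
by apply: (ub_le_sup ub_ratios); exists g.
Qed.

Lemma real_witness h x0 : B h -> exists g, [/\ B g, realvalued g,
  L g x0 = (normc (L h x0) ^+ 2)%:C%C,
  forall x, normc (g x) <= normc (L h x0) * normc (h x) &
  forall x, normc (L g x) <= normc (L h x0) * normc (L h x)].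
Proof.
move=> Bh; have [g1 [g2 [Bg1 g1_real Bg2 g2_real h_eq]]] := Bdecomp _ Bh.
have Lh_eq : L h = (fun x => L g1 x + 'i%C * L g2 x).
  by rewrite h_eq (Ladd _ _ Bg1 (Bscale _ _ Bg2)) Lscale.
set p := complex.Re (L g1 x0); set q := complex.Re (L g2 x0).
have Lg1x0 : L g1 x0 = p%:C%C := complex_real _ (L_real _ Bg1 g1_real x0).
have Lg2x0 : L g2 x0 = q%:C%C := complex_real _ (L_real _ Bg2 g2_real x0).
have n_eq : normc (L h x0) = Num.sqrt (p ^+ 2 + q ^+ 2).
  by rewrite Lh_eq Lg1x0 Lg2x0 normc_real_add_i.
exists (fun x => p%:C%C * g1 x + q%:C%C * g2 x); split.
- exact: Badd (Bscale _ _ Bg1) (Bscale _ _ Bg2).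
- by move=> x; rewrite (complex_real _ (g1_real x)) (complex_real _ (g2_real x)) /=; ring.
- rewrite L_lincomb // Lg1x0 Lg2x0 n_eq sqr_sqrtr ?addr_ge0 ?sqr_ge0 //.
  by apply/eqP; rewrite eq_complex /=; apply/andP; split; apply/eqP; ring.
- by move=> x; rewrite n_eq h_eq normc_real_comb_le.
- move=> x; rewrite L_lincomb // n_eq Lh_eq.
  exact: normc_real_comb_le (L_real _ Bg1 g1_real x) (L_real _ Bg2 g2_real x).
Qed.

Lemma normc_L_le h x0 : B h -> K x0 -> has_ubound [set normc (L h x) | x in K] ->
  normc (L h x0) <= sup real_ratios * N h.
Proof.
move=> Bh Kx0 [M ubM]; set n := normc (L h x0).
have [g [Bg g_real Lgx0 g_le Lg_le]] := real_witness _ x0 Bh.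
have n_ge0 : 0 <= n := normc_ge0 _.
have [->|n_neq0] := eqVneq n 0; first by rewrite mulr_ge0 ?N_ge0 ?sup_real_ratios_ge0.
have g_neq0 : g <> (fun _ => 0).
  move=> g0; move: Lgx0; rewrite g0 L0 => /(congr1 (@complex.Re R)) /= /esym/eqP.
  by rewrite sqrf_eq0 (negPf n_neq0).
have Ng_le : N g <= n * N h.
  rewrite -(normc_real _ n_ge0) -Nscale //; apply: N_monotone => // [|x _].
    exact: Bscale.
  by rewrite normcM normc_real //; exact: g_le.
have n2_le : n ^+ 2 <= supnorm K (L g).
  rewrite -(normc_real _ (sqr_ge0 n)) -Lgx0; apply: normc_le_supnorm Kx0.
  exists (n * M) => _ [x Kx <-].
  by apply: le_trans (Lg_le x) _; rewrite ler_wpM2l // ubM //; exists x.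
have : n ^+ 2 <= sup real_ratios * (n * N h).
  apply: le_trans n2_le (le_trans (supnorm_L_real_le _ Bg g_real g_neq0) _).
  by rewrite ler_wpM2l ?sup_real_ratios_ge0.
by rewrite mulrCA expr2 ler_pM2l // lt0r n_neq0.
Qed.

Lemma supnorm_L_le h : B h -> supnorm K (L h) <= sup real_ratios * N h.
Proof.
move=> Bh; have bound_ge0 : 0 <= sup real_ratios * N h.
  by rewrite mulr_ge0 ?N_ge0 ?sup_real_ratios_ge0.
rewrite /supnorm.
have [[_ ub_Lh]|/sup_out->//] := pselect (has_sup [set normc (L h x) | x in K]).
by apply: ge_sup_ge0 => // _ [x Kx <-]; exact: normc_L_le.
Qed.

Lemma sup_ratios_eq_real :
  sup [set supnorm K (L h) / N h | h in [set h | B h /\ h <> (fun _ => 0)]] =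
  sup real_ratios.
Proof.
apply/le_anti/andP; split.
  apply: ge_sup_ge0 => [|_ [h [Bh h_neq0] <-]]; first exact: sup_real_ratios_ge0.
  by rewrite ler_pdivrMr ?N_gt0 ?supnorm_L_le.
apply: ge_sup_ge0 => [|_ [g [Bg [_ g_neq0]] <-]].
  by apply: sup_ge0 => _ [h [Bh _] <-]; rewrite divr_ge0 ?supnorm_ge0 ?N_ge0.
apply: ub_le_sup; last by exists g.
by exists C => _ [h [Bh h_neq0] <-]; exact: ratio_le_bound.
Qed.

End RealReduction.

Theorem lemmaL2 (R : realType) (m : nat) (K : set 'rV[R]_m)
  (B : set ('rV[R]_m -> R[i]))
  (L : ('rV[R]_m -> R[i]) -> ('rV[R]_m -> R[i]))
  (N : ('rV[R]_m -> R[i]) -> R) :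
  compact K ->
  B `<=` CK K ->
  B (fun _ => 0) ->
  (forall g h, B g -> B h -> B (fun x => g x + h x)) ->
  (forall (a : R[i]) h, B h -> B (fun x => a * h x)) ->
  (forall h, B h -> exists g1 g2, [/\ B g1, realvalued g1, B g2, realvalued g2 &
        h = (fun x => g1 x + 'i%C * g2 x)]) ->
  (forall h, B h -> 0 <= N h) ->
  (forall h, B h -> N h = 0 -> h = (fun _ => 0)) ->
  (forall (a : R[i]) h, B h -> N (fun x => a * h x) = normc a * N h) ->
  (forall g h, B g -> B h -> N (fun x => g x + h x) <= N g + N h) ->
  (forall g h, B g -> B h -> (forall x, K x -> normc (g x) <= normc (h x)) ->
        N g <= N h) ->
  (forall h, B h -> CK K (L h)) ->
  (forall g h, B g -> B h -> L (fun x => g x + h x) = (fun x => L g x + L h x)) ->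
  (forall (a : R[i]) h, B h -> L (fun x => a * h x) = (fun x => a * L h x)) ->
  (exists C : R, forall h, B h -> supnorm K (L h) <= C * N h) ->
  (forall g, B g -> realvalued g -> realvalued (L g)) ->
  sup [set supnorm K (L h) / N h | h in [set h | B h /\ h <> (fun _ => 0)]] =
  sup [set supnorm K (L g) / N g |
         g in [set g | B g /\ realvalued g /\ g <> (fun _ => 0)]].
Proof.
move=> _ _ B0 Badd Bscale Bdecomp N_ge0 N_eq0 Nscale _ N_monotone _ Ladd Lscale
  [C L_bounded] L_real.
exact: (sup_ratios_eq_real B0 Badd Bscale Bdecomp N_ge0 N_eq0 Nscale N_monotone
  Ladd Lscale L_bounded L_real).
Qed.
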